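(* Let $X$ be a countably compact non-compact space with linear Lindelöf number $\kappa\ge\omega_1$, and let $Y$ be an $[\aleph_0,\kappa]$-compact C-closed space. Then: (a) for each continuous $f:X\to Y$, $f(X)$ is compact and there is $c\in Y$ such that $f^{-1}(\{c\})$ is non-Lindelöf; (b) if $X$ satisfies $\mathsf{IC}$ and $Y$ has $G_\delta$ points, then $\mathsf{EC}(X,Y)$ holds; (c) if $X$ satisfies $\mathsf{I0}$ and $Y$ is Tychonoff with $G_\delta$ points, then $\mathsf{EC}(X,Y)$ holds.
   Context: All spaces are Hausdorff and maps continuous. The linear Lindelöf number of $X$ is the least $\kappa$ such that every cover of $X$ by open sets linearly ordered by inclusion has a subcover of cardinality $\le\kappa$. A space is $[\aleph_0,\kappa]$-compact if every open cover of cardinality $\le\kappa$ has a countable subcover. A space is C-closed if every countably compact subspace is closed. A $0$-set is $g^{-1}(\{0\})$ for a continuous $g:X\to[0,1]$. $X$ satisfies $\mathsf{IC}$ (resp. $\mathsf{I0}$) if of any two disjoint closed subsets (resp. $0$-sets) at least one is Lindelöf. For non-Lindelöf $X$, $\mathsf{EC}(X,Y)$ means: for every continuous $f:X\to Y$ there is a Lindelöf $Z\subset X$ with $f(X\setminus Z)$ a singleton. *)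

From HB Require Import structures.
From mathcomp Require Import all_boot all_order all_algebra.
From mathcomp Require Import all_classical all_reals all_analysis.
From mathcomp Require Import Rstruct Rstruct_topology.
Set Implicit Arguments. Unset Strict Implicit. Unset Printing Implicit Defensive.
Import Order.TTheory GRing.Theory Num.Theory.
Local Open Scope classical_set_scope.
Local Open Scope ring_scope.
Local Open Scope card_scope.

(* All subspace notions below are for a subset A of a space T, covers being
   taken by open sets of T (equivalently, by relatively open sets of A). *)

Definition lindelof (T : topologicalType) (A : set T) : Prop :=
  forall C : set (set T), (forall U, C U -> open U) -> A `<=` \bigcup_(U in C) U ->
  exists D : set (set T), [/\ D `<=` C, countable D & A `<=` \bigcup_(U in D) U].

Definition countably_compact (T : topologicalType) (A : set T) : Prop :=
  forall C : set (set T), (forall U, C U -> open U) -> countable C ->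
  A `<=` \bigcup_(U in C) U ->
  exists D : set (set T), [/\ D `<=` C, finite_set D & A `<=` \bigcup_(U in D) U].

Definition lin_lindelof_le (X : topologicalType) (K : Type) (S : set K) : Prop :=
  forall C : set (set X), (forall U, C U -> open U) ->
  (forall U V, C U -> C V -> U `<=` V \/ V `<=` U) ->
  \bigcup_(U in C) U = [set: X] ->
  exists D : set (set X), [/\ D `<=` C, D #<= S & \bigcup_(U in D) U = [set: X]].

(* The linear Lindelof number of X is the cardinal |K|: the property holds for
   |K| and fails for every strictly smaller cardinal (all of which are
   represented by subsets of K). *)
Definition lin_lindelof_number (X : topologicalType) (K : Type) : Prop :=
  lin_lindelof_le X [set: K] /\
  forall S : set K, ~ ([set: K] #<= S) -> ~ lin_lindelof_le X S.

Definition aleph0_kappa_compact (Y : topologicalType) (K : Type) : Prop :=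
  forall C : set (set Y), (forall U, C U -> open U) -> C #<= [set: K] ->
  \bigcup_(U in C) U = [set: Y] ->
  exists D : set (set Y), [/\ D `<=` C, countable D & \bigcup_(U in D) U = [set: Y]].

Definition C_closed (Y : topologicalType) : Prop :=
  forall A : set Y, countably_compact A -> closed A.

Definition zero_set (X : topologicalType) (A : set X) : Prop :=
  exists g : X -> Rdefinitions.R, [/\ continuous g, (forall x, 0 <= g x <= 1) &
                        A = g @^-1` [set 0]].

Definition IC (X : topologicalType) : Prop :=
  forall A B : set X, closed A -> closed B -> A `&` B = set0 ->
  lindelof A \/ lindelof B.

Definition I0 (X : topologicalType) : Prop :=
  forall A B : set X, zero_set A -> zero_set B -> A `&` B = set0 ->
  lindelof A \/ lindelof B.

Definition Gdelta_points (Y : topologicalType) : Prop :=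
  forall y : Y, exists U : nat -> set Y,
    (forall n, open (U n)) /\ \bigcap_n U n = [set y].

Definition tychonoff_space (Y : topologicalType) : Prop :=
  (forall y : Y, closed [set y]) /\
  forall (A : set Y) (y : Y), closed A -> ~ A y ->
  exists g : Y -> Rdefinitions.R, [/\ continuous g, (forall z, 0 <= g z <= 1), g y = 0 &
                        forall z, A z -> g z = 1].

(* EC(X,Y) (meant for non-Lindelof X). *)
Definition EC (X Y : topologicalType) : Prop :=
  forall f : X -> Y, continuous f ->
  exists Z : set X, lindelof Z /\ exists c : Y, f @` (~` Z) = [set c].

From HB Require Import structures.
From mathcomp Require Import all_boot all_order all_algebra.
From mathcomp Require Import all_classical all_reals all_analysis.
From mathcomp Require Import Rstruct Rstruct_topology.
From mathcomp Require Import lra.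
Import GRing.Theory Num.Theory.
Set Implicit Arguments. Unset Strict Implicit. Unset Printing Implicit Defensive.
Local Open Scope classical_set_scope.

(* f(X) is countably compact, hence closed since Y is C-closed.  It is even
   compact, by the chain criterion: an increasing open cover of f(X) pulls back
   to an increasing open cover of X, which has a subcover of size at most
   kappa; enlarging its members by Y \ f(X), [aleph_0, kappa]-compactness of Y
   leaves a countable subcover, and countable compactness a finite one.
   C-closedness also makes f a closed map.  If all fibres were Lindelof they
   would be compact (being closed in the countably compact X), so f would be
   perfect with compact range and X would be compact.
   For (b) and (c), write a non-Lindelof fibre f^-1(c) as the intersection of
   the f^-1(U_n) with U_n open; IC, resp. I0 applied to the zero sets of an
   Urysohn function separating c from Y \ U_n, yields a Lindelof set L_n
   containing f^-1(Y \ U_n) and missing f^-1(c), and the union Z of the L_n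
   satisfies f(X \ Z) = {c}. *)

Lemma subset_image_section (A B : Type) (h : A -> B) (C : set A) (E : set B) :
  E `<=` h @` C -> exists D, [/\ D `<=` C, h @` D = E & (D #<= E)%card].
Proof.
move=> sEC.
have [[a0 _]|A0] := pselect (exists a : A, True); last first.
  exists set0; split; [by []| |exact: card_ge0].
  rewrite image_set0; apply/seteqP; split => // b /sEC[a].
  by have := A0 (ex_intro _ a I).
have [g gP] : {g : B -> A & forall b, E b -> C (g b) /\ h (g b) = b}.
  apply: (@choice _ _ (fun b a => E b -> C a /\ h a = b)) => b.
  by have [/sEC[a Ca <-]|Eb] := pselect (E b); [exists a|exists a0].
exists (g @` E); split; last exact: card_image_le.
- by move=> _ [b /gP[? _] <-].
- apply/seteqP; split => [_ [_ [b Eb <-] <-]|b Eb]; first by rewrite (gP _ Eb).2.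
  by exists (g b); [exists b|rewrite (gP _ Eb).2].
Qed.

Lemma countableU (T : Type) (A B : set T) :
  countable A -> countable B -> countable (A `|` B).
Proof.
move=> cA cB; have -> : A `|` B = \bigcup_(i in [set: bool]) (if i then A else B).
  apply/seteqP; split => [x [] ?|x [] [] _ ?];
  by [exists true|exists false|left|right].
by apply: bigcup_countable; [exact: countableP|case].
Qed.

Lemma finite_chain_max (T : Type) (D : set (set T)) :
  finite_set D -> D !=set0 -> total_on D subset ->
  exists2 M, D M & forall U, D U -> U `<=` M.
Proof.
move=> /finite_seqP[s ->]; elim: s => [[U]//|V s IH] _.
case: s IH => [_ _|W s IH tot].
  by exists V => [|U]; rewrite /= mem_seq1 // => /eqP->.
have [|U W' Us|M sM Mmax] := IH; first by exists W; rewrite /= inE eqxx.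
  by move=> Ws; apply: tot; rewrite /= inE ?Us ?Ws orbT.
have Vs : [set` V :: W :: s] V by rewrite /= inE eqxx.
have Ms : [set` V :: W :: s] M by rewrite /= inE sM orbT.
have [VM|MV] := tot V M Vs Ms.
- by exists M => // U; rewrite /= inE => /orP[/eqP->//|/Mmax].
- exists V => // U; rewrite /= inE => /orP[/eqP->//|/Mmax UM].
  exact: subset_trans UM MV.
Qed.

(* [compact_cover] is only stated for pointed spaces. *)
Definition pointed_at (T : topologicalType) (x : T) : Type := T.
HB.instance Definition _ (T : topologicalType) (x : T) :=
  Topological.copy (pointed_at x) T.
HB.instance Definition _ (T : topologicalType) (x : T) :=
  isPointed.Build (pointed_at x) x.

Section Covers.
Variable T : topologicalType.

Lemma finite_subcover_compact (A : set T) :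
  (forall C : set (set T), (forall U, C U -> open U) ->
     A `<=` \bigcup_(U in C) U ->
     exists D, [/\ D `<=` C, finite_set D & A `<=` \bigcup_(U in D) U]) ->
  compact A.
Proof.
move=> Afin; have [[x _]|T0] := pselect (exists x : T, True); last first.
  suff -> : A = set0 by exact: compact0.
  by apply/seteqP; split => // y; have := T0 (ex_intro _ y I).
change (@compact (pointed_at x) A); rewrite compact_cover => I D f fo Acov.
have fDo : forall U, (f @` D) U -> open U by move=> _ [i Di <-]; exact: fo.
have AfD : A `<=` \bigcup_(U in f @` D) U.
  by move=> y /Acov[i Di fiy]; exists (f i) => //; exists i.
have [E [EfD Efin AE]] := Afin _ fDo AfD.
have [D' [D'D D'E D'card]] := subset_image_section EfD.
have /finite_fsetP[s sD'] : finite_set D' by exact: card_le_finite D'card Efin.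
exists s => [i si|y /AE[U]]; first by rewrite inE; apply: D'D; rewrite sD'.
by rewrite -D'E => -[i D'i <-] fiy; exists i => //; move: D'i; rewrite sD'.
Qed.

Section ChainCovers.
Variables (A : set T) (C : set (set T)).
Hypothesis chainA : forall G : set (set T), (forall U, G U -> open U) ->
  total_on G subset -> A `<=` \bigcup_(U in G) U ->
  exists D, [/\ D `<=` G, finite_set D & A `<=` \bigcup_(U in D) U].
Hypothesis oC : forall U, C U -> open U.

Let covers_with (V : set T) := exists D,
  [/\ D `<=` C, finite_set D & A `<=` V `|` \bigcup_(U in D) U].

(* The chain hypothesis on [A] makes [~ covers_with] stable under unions of
   chains of open sets, so that Zorn's lemma applies. *)
Let covers_with_chain (F : set (set T)) : (forall V, F V -> open V) ->
  total_on F subset -> covers_with (\bigcup_(V in F) V) ->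
  covers_with set0 \/ exists2 V, F V & covers_with V.
Proof.
move=> oF Ftot [D [DC Dfin AFD]]; set W := \bigcup_(U in D) U.
pose G := W |` ((fun V => V `|` W) @` F).
have oG : forall U, G U -> open U.
  move=> _ [->|[V FV <-]]; first by apply: bigcup_open => U /DC/oC.
  by apply: openU; [exact: oF|apply: bigcup_open => U /DC/oC].
have Gtot : total_on G subset.
  move=> _ _ [->|[V1 FV1 <-]] [->|[V2 FV2 <-]];
    try by [left|right|left; exact: subsetUr|right; exact: subsetUr].
  by case: (Ftot V1 V2 FV1 FV2) => s; [left|right]; exact: setSU.
have AG : A `<=` \bigcup_(U in G) U.
  move=> a /AFD[[V FV Va]|Wa]; last by exists W => //; left.
  by exists (V `|` W); [right; exists V|left].
have [E [EG Efin AE]] := chainA oG Gtot AG.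
have [Ene|E0] := pselect (E !=set0); last first.
  by left; exists D; split => // a /AE[U EU]; case: E0; exists U.
have [M EM Mmax] := finite_chain_max Efin Ene
  (fun U V EU EV => Gtot U V (EG U EU) (EG V EV)).
have AM : A `<=` M by move=> a /AE[U EU Ua]; exact: Mmax U EU a Ua.
case: (EG M EM) => [MW|[V FV VWM]].
- by left; exists D; split => // a /AM; rewrite MW; right.
- by right; exists V => //; exists D; split => // a /AM; rewrite -VWM.
Qed.

Lemma chain_finite_subcover : A `<=` \bigcup_(U in C) U ->
  exists D, [/\ D `<=` C, finite_set D & A `<=` \bigcup_(U in D) U].
Proof.
move=> AC; apply: contrapT => nfin.
have nset0 : ~ covers_with set0.
  case=> D [DC Dfin AD]; apply: nfin; exists D; split => // a /AD.
  by rewrite set0U.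
pose P V := open V /\ ~ covers_with V.
have [M [[oM nM] Mmax]] : exists M, P M /\ forall B, M `<` B -> ~ P B.
  apply: Zorn_bigcup => F FP Ftot; split; first by apply: bigcup_open => V /FP[].
  case/(covers_with_chain (fun V FV => (FP V FV).1) Ftot) => //.
  by case=> V /FP[].
have AM : A `<=` M.
  move=> a Aa; apply: contrapT => nMa; have [U CU Ua] := AC a Aa.
  apply: (Mmax (M `|` U)).
    by split; [exact: subsetUl|move=> /(_ a (or_intror Ua))].
  split; first by apply: openU => //; exact: oC.
  case=> D [DC Dfin AMUD]; apply: nM; exists (U |` D); split.
  - by move=> V [->|/DC].
  - by rewrite finite_setU; split => //; exact: finite_set1.
  - move=> b /AMUD[[Mb|Ub]|[V DV Vb]]; first by left.
      by right; exists U => //; left.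
    by right; exists V => //; right.
by apply: nM; exists set0; split; [|exact: finite_set0|move=> a /AM; left].
Qed.

End ChainCovers.

Lemma chain_compact (A : set T) :
  (forall C : set (set T), (forall U, C U -> open U) ->
     total_on C subset -> A `<=` \bigcup_(U in C) U ->
     exists D, [/\ D `<=` C, finite_set D & A `<=` \bigcup_(U in D) U]) ->
  compact A.
Proof.
move=> chainA; apply: finite_subcover_compact => C oC.
exact: chain_finite_subcover.
Qed.

Lemma cover_add_complement (A B : set T) (C : set (set T)) :
  closed A -> A `<=` B -> (forall U, C U -> open U) ->
  A `<=` \bigcup_(U in C) U ->
  [/\ forall U, (~` A |` C) U -> open U,
      B `<=` \bigcup_(U in ~` A |` C) U &
      forall D, D `<=` ~` A |` C -> B `<=` \bigcup_(U in D) U ->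
        A `<=` \bigcup_(U in D `&` C) U].
Proof.
move=> clA AB oC AC; split.
- by move=> U [->|/oC//]; exact: closed_openC.
- move=> x _; have [Ax|nAx] := pselect (A x); last by exists (~` A) => //; left.
  by have [U CU Ux] := AC x Ax; exists U => //; right.
- move=> D DAC BD x Ax; have [U DU Ux] := BD x (AB x Ax).
  by exists U => //; split => //; case: (DAC U DU) => // UA; rewrite UA in Ux.
Qed.

Lemma subclosed_countably_compact (A B : set T) :
  closed A -> countably_compact B -> A `<=` B -> countably_compact A.
Proof.
move=> clA ccB AB C oC cC AC.
have [oAC BAC ACD] := cover_add_complement clA AB oC AC.
have [D [DAC Dfin BD]] := ccB _ oAC (countableU (countable1 _) cC) BAC.
by exists (D `&` C); split; [exact: subIsetr|exact: finite_setIl|exact: ACD].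
Qed.

Lemma subclosed_lindelof (A B : set T) :
  closed A -> lindelof B -> A `<=` B -> lindelof A.
Proof.
move=> clA lB AB C oC AC.
have [oAC BAC ACD] := cover_add_complement clA AB oC AC.
have [D [DAC cD BD]] := lB _ oAC BAC.
exists (D `&` C); split; [exact: subIsetr| |exact: ACD].
exact: sub_countable (subset_card_le (@subIsetl _ _ _)) cD.
Qed.

Lemma lindelof_set0 : lindelof (@set0 T).
Proof. by move=> C _ _; exists set0; split => //; exact: countable0. Qed.

Lemma lindelof_bigcup (L : nat -> set T) :
  (forall n, lindelof (L n)) -> lindelof (\bigcup_n L n).
Proof.
move=> lL C oC LC.
have /choice[D DP] : forall n, exists D : set (set T),
    [/\ D `<=` C, countable D & L n `<=` \bigcup_(U in D) U].
  by move=> n; apply: lL => // x Lx; apply: LC; exists n.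
exists (\bigcup_n D n); split.
- by move=> U [n _]; case: (DP n) => + _ _; apply.
- by apply: bigcup_countable => // n _; case: (DP n).
- move=> x [n _ Lx]; have [_ _ /(_ x Lx)[U DU Ux]] := DP n.
  by exists U => //; exists n.
Qed.

Lemma lindelof_countably_compact (A : set T) :
  lindelof A -> countably_compact A -> compact A.
Proof.
move=> lA ccA; apply: finite_subcover_compact => C oC AC.
have [D [DC cD AD]] := lA C oC AC.
have [E [ED Efin AE]] := ccA D (fun U DU => oC U (DC U DU)) cD AD.
by exists E; split => // U /ED/DC.
Qed.

End Covers.

Section Maps.
Variables (X Y : topologicalType) (f : X -> Y).

Lemma continuous_countably_compact (A : set X) :
  continuous f -> countably_compact A -> countably_compact (f @` A).
Proof.
move=> fc ccA C oC cC AC.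
have ofC : forall U, (preimage f @` C) U -> open U.
  by move=> _ [V CV <-]; apply: open_comp => [x _|]; [exact: fc|exact: oC].
have AfC : A `<=` \bigcup_(U in preimage f @` C) U.
  move=> x Ax; have [V CV Vfx] := AC (f x) (imageP f Ax).
  by exists (f @^-1` V) => //; exists V.
have [E [EfC Efin AE]] :=
  ccA _ ofC (sub_countable (card_image_le _ _) cC) AfC.
have [D [DC DE Dcard]] := subset_image_section EfC.
exists D; split => //; first exact: card_le_finite Dcard Efin.
move=> _ [x Ax <-]; have [U] := AE x Ax.
by rewrite -DE => -[V DV <-] Vfx; exists V.
Qed.

Lemma closed_fiber (y : Y) :
  closed [set y] -> continuous f -> closed (f @^-1` [set y]).
Proof. by move=> cly fc; exact: (continuous_closedP f).1. Qed.

Lemma C_closed_closed_map (B : set X) :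
  countably_compact [set: X] -> C_closed Y -> continuous f ->
  closed B -> closed (f @` B).
Proof.
move=> ccX CY fc clB; apply: CY; apply: continuous_countably_compact => //.
exact: subclosed_countably_compact clB ccX (subsetT B).
Qed.

Lemma closed_map_compact_fibers :
  (forall B, closed B -> closed (f @` B)) ->
  (forall y, compact (f @^-1` [set y])) -> compact (range f) ->
  compact [set: X].
Proof.
move=> fcl fibc Rc F PF _.
have fFR : F (f @^-1` range f) by apply: filterE => x; exists x.
have [y [_ clfFy]] := Rc (f @ F) _ fFR.
have meet_fiber B : F B -> closure B `&` f @^-1` [set y] !=set0.
  move=> FB; have FfB : F (f @^-1` (f @` B)).
    by apply: filterS FB => x Bx; exists x.
  have : closure (f @` B) y by rewrite clusterE in clfFy; exact: clfFy.
  move=> /(closureS (image_subset f (@subset_closure _ B))).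
  rewrite -(closure_id _).1; last exact/fcl/closed_closure.
  by case=> x clBx fxy; exists x.
pose H := filter_from F (fun B => closure B `&` f @^-1` [set y]).
have PH : ProperFilter H.
  apply: filter_from_proper meet_fiber; apply: filter_from_filter.
    by exists setT; exact: filterT.
  move=> B1 B2 FB1 FB2; exists (B1 `&` B2); first exact: filterI.
  by move=> x [clx fx]; split; split => //; apply: closureS clx => ? [].
have [|x [_ clHx]] := fibc y H PH.
  by exists setT; [exact: filterT|move=> x []].
exists x; split => //; rewrite clusterE => B FB.
have : closure (closure B `&` f @^-1` [set y]) x.
  by rewrite clusterE in clHx; apply: clHx; exists B.
move=> /(closureS (@subIsetl _ (closure B) _)).
by rewrite -(closure_id _).1 //; exact: closed_closure.
Qed.

End Maps.

Lemma lin_lindelof_range_cover (X Y : topologicalType) (K : Type) (S : set K)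
    (f : X -> Y) (C : set (set Y)) :
  lin_lindelof_le X S -> continuous f -> (forall U, C U -> open U) ->
  total_on C subset -> range f `<=` \bigcup_(U in C) U ->
  exists D, [/\ D `<=` C, (D #<= S)%card & range f `<=` \bigcup_(U in D) U].
Proof.
move=> linX fc oC Ctot RC.
have [|||E [EfC ES Ecov]] := linX (preimage f @` C).
- by move=> _ [V CV <-]; apply: open_comp => [x _|]; [exact: fc|exact: oC].
- move=> _ _ [U CU <-] [V CV <-].
  by case: (Ctot U V CU CV) => UV; [left|right] => x; apply: UV.
- apply/seteqP; split => // x _; have [U CU Ufx] := RC (f x) (imageT f x).
  by exists (f @^-1` U) => //; exists U.
have [D [DC DE Dcard]] := subset_image_section EfC.
exists D; split => //; first exact: card_le_trans Dcard ES.
move=> _ [x _ <-]; have : [set: X] x by [].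
by rewrite -Ecov -DE => -[_ [U DU <-] Ufx]; exists U.
Qed.

Lemma aleph0_kappa_compact_closed (Y : topologicalType) (K : Type)
    (R : set Y) (D : set (set Y)) :
  aleph0_kappa_compact Y K -> closed R -> (forall U, D U -> open U) ->
  (D #<= [set: K])%card -> R `<=` \bigcup_(U in D) U ->
  exists E, [/\ E `<=` D, countable E & R `<=` \bigcup_(U in E) U].
Proof.
move=> AK clR oD DK RD.
have [[V0 DV0]|D0] := pselect (D !=set0); last first.
  exists D; split => //; suff -> : D = set0 by exact: countable0.
  by apply/seteqP; split => // U DU; case: D0; exists U.
(* Enlarging the members by ~` R, rather than adding ~` R to [D], keeps the
   family of size at most |K| even when K is finite. *)
pose g V := V `|` ~` R.
have [|||E [EgD cE Ecov]] := AK (g @` D).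
- by move=> _ [V DV <-]; apply: openU; [exact: oD|exact: closed_openC].
- exact: card_le_trans (card_image_le _ _) DK.
- apply/seteqP; split => // y _; have [Ry|nRy] := pselect (R y).
    by have [V DV Vy] := RD y Ry; exists (g V); [exists V|left].
  by exists (g V0); [exists V0|right].
have [E' [E'D E'E E'card]] := subset_image_section EgD.
exists E'; split => //; first exact: sub_countable E'card cE.
move=> y Ry; have : [set: Y] y by [].
by rewrite -Ecov -E'E => -[_ [V E'V <-] [Vy|//]]; exists V.
Qed.

Lemma compact_range (X Y : topologicalType) (K : Type) (f : X -> Y) :
  countably_compact [set: X] -> lin_lindelof_le X [set: K] ->
  aleph0_kappa_compact Y K -> C_closed Y -> continuous f -> compact (range f).
Proof.
move=> ccX linX AK CY fc.
have ccR : countably_compact (range f) by exact: continuous_countably_compact.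
apply: chain_compact => C oC Ctot RC.
have [D [DC DK RD]] := lin_lindelof_range_cover linX fc oC Ctot RC.
have oD : forall U, D U -> open U by move=> U /DC/oC.
have [E [ED cE RE]] := aleph0_kappa_compact_closed AK (CY _ ccR) oD DK RD.
have [F [FE Ffin RF]] := ccR E (fun U EU => oD U (ED U EU)) cE RE.
by exists F; split => // U /FE/ED/DC.
Qed.

Lemma fiber_not_lindelof (X Y : topologicalType) (f : X -> Y) :
  (forall y : Y, closed [set y]) ->
  countably_compact [set: X] -> ~ compact [set: X] ->
  C_closed Y -> continuous f -> compact (range f) ->
  exists c : Y, ~ lindelof (f @^-1` [set c]).
Proof.
move=> T1Y ccX ncX CY fc Rc; apply: contrapT => /forallNP lfib; apply: ncX.
apply: closed_map_compact_fibers Rc => [B|y].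
  exact: C_closed_closed_map.
apply: lindelof_countably_compact; first exact: contrapT (lfib y).
apply: (subclosed_countably_compact _ ccX (subsetT _)); exact: closed_fiber.
Qed.

Lemma EC_of_lindelof_separation (X Y : topologicalType) :
  Gdelta_points Y ->
  (forall f : X -> Y, continuous f -> exists c, ~ lindelof (f @^-1` [set c])) ->
  (forall (f : X -> Y) (c : Y) (V : set Y), continuous f -> open V -> V c ->
     ~ lindelof (f @^-1` [set c]) ->
     exists L, [/\ lindelof L, f @^-1` (~` V) `<=` L &
                   L `<=` ~` (f @^-1` [set c])]) ->
  EC X Y.
Proof.
move=> GY fibers sep f fc.
have [c nLc] := fibers f fc; have [U [oU Uc]] := GY c.
have Unc n : U n c by have /(_ n I) : (\bigcap_n U n) c by rewrite Uc.
have /choice[L LP] := fun n => sep f c (U n) fc (oU n) (Unc n) nLc.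
exists (\bigcup_n L n); split; first by apply: lindelof_bigcup => n; case: (LP n).
exists c; apply/seteqP; split.
  move=> _ [x nLx <-]; apply: contrapT => nfxc.
  have : ~ (\bigcap_n U n) (f x) by rewrite Uc.
  move=> /existsNP[n /not_implyP[_ nUfx]].
  by apply: nLx; exists n => //; case: (LP n) => _ + _; apply.
move=> _ ->; have [x fxc] : exists x, f x = c.
  apply: contrapT => /forallNP nx; apply: nLc.
  suff -> : f @^-1` [set c] = set0 by exact: lindelof_set0.
  by apply/seteqP; split => // x /nx.
by exists x => // -[n _ Lx]; case: (LP n) => _ _ /(_ x Lx); apply.
Qed.

Lemma IC_lindelof_separation (X Y : topologicalType) (f : X -> Y) (c : Y)
    (V : set Y) :
  IC X -> closed [set c] -> continuous f -> open V -> V c ->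
  ~ lindelof (f @^-1` [set c]) ->
  exists L, [/\ lindelof L, f @^-1` (~` V) `<=` L & L `<=` ~` (f @^-1` [set c])].
Proof.
move=> ICX clc fc oV Vc nLc; exists (f @^-1` (~` V)); split => //; last first.
  by move=> x /= nVfx fxc; apply: nVfx; rewrite fxc.
have clV : closed (f @^-1` (~` V)).
  by apply: (continuous_closedP f).1 => //; exact: open_closedC.
have disj : f @^-1` [set c] `&` f @^-1` (~` V) = set0.
  by apply/seteqP; split => // x [/= ->].
by case: (ICX _ _ (closed_fiber clc fc) clV disj).
Qed.

Local Open Scope ring_scope.

Lemma zero_set_preimage1 (T : topologicalType) (g : T -> Rdefinitions.R) :
  continuous g -> (forall x, 0 <= g x <= 1) -> zero_set (g @^-1` [set 1]).
Proof.
move=> gc g01; exists (fun x => 1 - g x); split.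
- move=> x; exact: (@continuousB _ Rdefinitions.R^o _ (fun=> 1) g x
    (@cst_continuous _ _ _ x) (gc x)).
- by move=> x; have /andP[? ?] := g01 x; apply/andP; split; lra.
- apply/seteqP; split => x /=; first by move->; rewrite subrr.
  by move/eqP; rewrite subr_eq0 => /eqP<-.
Qed.

Lemma I0_lindelof_separation (X Y : topologicalType) (f : X -> Y) (c : Y)
    (V : set Y) :
  I0 X -> tychonoff_space Y -> continuous f -> open V -> V c ->
  ~ lindelof (f @^-1` [set c]) ->
  exists L, [/\ lindelof L, f @^-1` (~` V) `<=` L & L `<=` ~` (f @^-1` [set c])].
Proof.
move=> I0X [T1Y creg] fc oV Vc nLc.
have [g [gc g01 gc0 g1]] := creg (~` V) c (open_closedC oV) (fun nVc => nVc Vc).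
have gfc : continuous (g \o f).
  by move=> x; exact: continuous_comp (fc x) (gc (f x)).
pose Z0 := (g \o f) @^-1` [set 0]; pose Z1 := (g \o f) @^-1` [set 1].
have zZ0 : zero_set Z0 by exists (g \o f); split => // x; exact: g01.
have zZ1 : zero_set Z1 by apply: zero_set_preimage1 => // x; exact: g01.
have disj : Z0 `&` Z1 = set0.
  apply/seteqP; split => // x [Z0x Z1x].
  by have /eqP := etrans (esym Z0x) Z1x; rewrite eq_sym oner_eq0.
exists Z1; split.
- case: (I0X Z0 Z1 zZ0 zZ1 disj) => // lZ0; case: nLc.
  apply: (subclosed_lindelof _ lZ0); first exact: closed_fiber.
  by move=> x /= fxc; rewrite /Z0 /= fxc gc0.
- by move=> x /= nVfx; exact: g1.
- move=> x Z1x fxc; move: Z1x; rewrite /Z1 /= fxc gc0 => /eqP.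
  by rewrite eq_sym oner_eq0.
Qed.

Unset Implicit Arguments.

Theorem theorem3p8 (X Y : topologicalType) (K : Type) :
  hausdorff_space X -> hausdorff_space Y ->
  countably_compact [set: X] -> ~ compact [set: X] ->
  lin_lindelof_number X K -> ~ countable [set: K] ->
  aleph0_kappa_compact Y K -> C_closed Y ->
  (forall f : X -> Y, continuous f ->
     compact (range f) /\ exists c : Y, ~ lindelof (f @^-1` [set c])) /\
  (IC X -> Gdelta_points Y -> EC X Y) /\
  (I0 X -> tychonoff_space Y -> Gdelta_points Y -> EC X Y).
Proof.
move=> _ hY ccX ncX [linX _] _ AK CY.
have T1Y (y : Y) : closed [set y].
  exact/accessible_closed_set1/hausdorff_accessible.
have partA (f : X -> Y) : continuous f ->
    compact (range f) /\ exists c : Y, ~ lindelof (f @^-1` [set c]).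
  move=> fc; have Rc := compact_range ccX linX AK CY fc.
  by split => //; exact: fiber_not_lindelof.
have fibers (f : X -> Y) (fc : continuous f) := (partA f fc).2.
split => //; split => [ICX GY|I0X tY GY];
  apply: EC_of_lindelof_separation => // f c V fc oV Vc.
- exact: IC_lindelof_separation.
- exact: I0_lindelof_separation.
Qed.
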